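(* Let $P$ be a domain and $D\ge 2$ an integer. Let $q_1,\dots,q_\ell$ ($\ell\ge1$) be distinct pixels of $P$ forming a path $q_1q_2\cdots q_\ell$ in $G_P$ whose pixel centers lie either on one straight segment or on two perpendicular segments meeting at one bend, such that $q_1$ is a boundary pixel and $\mathrm{vdist}(q_i)=i$ for $i=1,\dots,\ell$. Let $1\le J\le \ell$, and suppose $q_1,\dots,q_J$ carry no snow, each of $q_{J+1},\dots,q_\ell$ carries exactly one unit of snow, and the snowblower stands on $q_1$. Write $\ell-J=kD+r$ with integers $k\ge0$, $0\le r<D$, and let $\Delta=\frac1D\sum_{i=J+1}^{\ell} i$. Then in the default model there is a sequence of moves obeying the capacity constraint, in which the snowblower only visits pixels among $q_1,\dots,q_\ell$ and snow is only thrown onto pixels among $q_1,\dots,q_\ell$ or out of $P$, which ends with the snowblower on $q_1$ and none of $q_1,\dots,q_\ell$ carrying snow, and whose number of moves is at most $2(\ell-1)+4\Delta$ if $D\ge4$ and at most $2(\ell-1)+2\Delta$ if $D\in\{2,3\}$. Moreover, if $r=0$, the number of moves is at most $4\Delta$ if $D\ge 4$ and at most $2\Delta$ if $D\in\{2,3\}$.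
   Context: A pixel is a closed unit square $[i,i+1]\times[j,j+1]$, $i,j\in\mathbb{Z}$; two pixels are adjacent if they share a side. The domain $P$ is a finite set of pixels whose dual graph $G_P$ (vertex per pixel, edges between adjacent pixels) is connected. A boundary side is a side of a pixel of $P$ not shared with another pixel of $P$; a boundary pixel is a pixel of $P$ with a boundary side. For $q\in P$, $\mathrm{vdist}(q)=1+\min_{b}\mathrm{dist}_{G_P}(q,b)$, the minimum over boundary pixels $b$ of $P$. A move (default model): the snowblower goes from its pixel $v$ to an adjacent pixel $u\in P$, and upon entering $u$ all snow on $u$ is thrown onto any chosen one of the four pixels adjacent to $u$ (including $v$); if that pixel is not in $P$ the snow disappears, otherwise it is added to the snow there. Capacity constraint: at all times every pixel of $P$ carries at most $D$ units of snow. *)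

From mathcomp Require Import all_boot all_order all_algebra.
Set Implicit Arguments. Unset Strict Implicit. Unset Printing Implicit Defensive.
Import Order.TTheory GRing.Theory Num.Theory.

(* A pixel [i,i+1]x[j,j+1] is represented by its lower-left corner (i,j). *)
Definition pixel := (int * int)%type.

Definition adj (p q : pixel) : bool :=
  ((p.1 == q.1) && ((p.2 == q.2 + 1)%R || (q.2 == p.2 + 1)%R)) ||
  ((p.2 == q.2) && ((p.1 == q.1 + 1)%R || (q.1 == p.1 + 1)%R)).

Definition walk (P : seq pixel) (a b : pixel) (n : nat) : Prop :=
  exists s : seq pixel,
    [/\ a \in P, path adj a s, all (mem P) s, last a s = b & size s = n].

Definition domain (P : seq pixel) : Prop :=
  forall a b, a \in P -> b \in P -> exists n, walk P a b n.

Definition boundary (P : seq pixel) (b : pixel) : Prop :=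
  b \in P /\ exists c, adj b c /\ c \notin P.

Definition vdist_is (P : seq pixel) (q : pixel) (v : nat) : Prop :=
  (exists b n, [/\ boundary P b, walk P q b n & v = n.+1]) /\
  (forall b n, boundary P b -> walk P q b n -> v <= n.+1).

Definition state := (pixel * (pixel -> nat))%type.

Definition capacity (P : seq pixel) (D : nat) (s : pixel -> nat) : Prop :=
  forall p, p \in P -> s p <= D.

(* A move in the default model: the snowblower goes from v to an adjacent
   pixel u of P, and all snow on u is thrown onto the adjacent pixel w
   (disappearing if w is not in P). *)
Definition legal_move (P : seq pixel) (v u w : pixel) : bool :=
  [&& adj v u, u \in P & adj u w].

Definition throw_snow (P : seq pixel) (s : pixel -> nat) (u w : pixel) :
  pixel -> nat :=
  fun p => if p == u then 0
           else if (p == w) && (w \in P) then s p + s u else s p.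

Definition step (P : seq pixel) (st : state) (m : pixel * pixel) : state :=
  (m.1, throw_snow P st.2 m.1 m.2).

Definition final_state (P : seq pixel) (st : state) (ms : seq (pixel * pixel)) :
  state := foldl (step P) st ms.

(* [valid_run P D ok st ms]: the sequence of moves ms (target pixel, throw
   pixel) from st consists of legal moves, each allowed by [ok], and the
   capacity constraint holds after every move. *)
Fixpoint valid_run (P : seq pixel) (D : nat) (ok : pixel -> pixel -> bool)
  (st : state) (ms : seq (pixel * pixel)) : Prop :=
  match ms with
  | [::] => True
  | m :: ms' =>
      [/\ legal_move P st.1 m.1 m.2, ok m.1 m.2,
          capacity P D (step P st m).2 & valid_run P D ok (step P st m) ms']
  end.

Definition aligned (q : nat -> pixel) (a b : nat) : Prop :=
  (forall i, a <= i <= b -> (q i).1 = (q a).1) \/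
  (forall i, a <= i <= b -> (q i).2 = (q a).2).

Definition straight_or_one_bend (q : nat -> pixel) (l : nat) : Prop :=
  exists m, [/\ 1 <= m <= l, aligned q 1 m & aligned q m l].

Definition on_path (q : nat -> pixel) (l : nat) : seq pixel :=
  [seq q i | i <- iota 1 l].

From mathcomp Require Import all_boot all_order all_algebra.
From mathcomp Require Import zify.
Import Order.TTheory GRing.Theory Num.Theory.
Set Implicit Arguments. Unset Strict Implicit.

(** The tail q_(J+1) .. q_l is cleared by round trips from q_1, each clearing
   the next D loaded pixels q_(a+1) .. q_m. Walking out to q_m, every entered
   pixel throws its unit back one step, so the load moves one pixel towards
   q_1; walking home, every entered pixel throws everything it holds one step
   further, so the load accumulates into a single pile of m - a <= D units,
   which q_1 finally throws out of P through its boundary side. A trip to q_m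
   costs 2(m - 1) moves, and for a full batch
   D * 2(a + D - 1) <= c * sum_(a < i <= a + D) i with c = 4, and even with
   c = 2 when D <= 3; an incomplete last batch costs at most 2(l - 1). *)

Lemma adjC p r : adj p r = adj r p.
Proof.
rewrite /adj [r.1 == p.1]eq_sym [r.2 == p.2]eq_sym.
by rewrite [(r.2 == (p.2 + 1)%R) || _]orbC [(r.1 == (p.1 + 1)%R) || _]orbC.
Qed.

Lemma final_state_cat P st ms1 ms2 :
  final_state P st (ms1 ++ ms2) = final_state P (final_state P st ms1) ms2.
Proof. by rewrite /final_state foldl_cat. Qed.

Lemma valid_run_cat P D ok st ms1 ms2 :
  valid_run P D ok st ms1 -> valid_run P D ok (final_state P st ms1) ms2 ->
  valid_run P D ok st (ms1 ++ ms2).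
Proof. by elim: ms1 st => [|m ms IH] st //= [? ? ? /IH run] /run. Qed.

Definition tail_sum a b := \sum_(a.+1 <= i < b.+1) i.

Lemma tail_sum_double a n : 2 * tail_sum a (a + n) = n * (2 * a + n + 1).
Proof.
elim: n => [|n IH]; first by rewrite addn0 /tail_sum big_geq.
by rewrite addnS /tail_sum big_nat_recr /= -/(tail_sum _ _) ?mulnDr ?IH; lia.
Qed.

Lemma tail_sum_cat a m b :
  a <= m <= b -> tail_sum a b = tail_sum a m + tail_sum m b.
Proof. by move=> le_amb; rewrite /tail_sum (@big_cat_nat _ _ _ m.+1) //; lia. Qed.

Definition trip_rate D := if D <= 3 then 2 else 4.

Lemma batch_trip_cost D a :
  1 <= a -> D * (2 * (a + D - 1)) <= trip_rate D * tail_sum a (a + D).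
Proof. by move=> a_gt0; have := tail_sum_double a D; rewrite /trip_rate; case: ifP; nia. Qed.

Lemma cost_le_rat (D n S Y e : nat) : 0 < D -> D * n <= e * S + D * Y ->
  (n%:R <= Y%:R + e%:R * (S%:R / D%:R) :> rat)%R.
Proof.
move=> D_gt0 cost.
have D_gt0' : (0 < D%:R :> rat)%R by rewrite ltr0n.
have -> : (Y%:R + e%:R * (S%:R / D%:R) = (D * Y + e * S)%:R / D%:R :> rat)%R.
  rewrite natrD !natrM mulrDl mulrA; congr (_ + _)%R.
  by rewrite mulrAC divff ?mul1r // gt_eqF.
by rewrite ler_pdivlMr // -natrM ler_nat; lia.
Qed.

Lemma trip_rate_cost_rat (D n S Y : nat) :
  0 < D -> D * n <= trip_rate D * S + D * Y ->
  (4 <= D -> (n%:R <= Y%:R + 4 * (S%:R / D%:R) :> rat)%R) /\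
  (D <= 3 -> (n%:R <= Y%:R + 2 * (S%:R / D%:R) :> rat)%R).
Proof.
rewrite /trip_rate => D_gt0 cost.
split=> D_range; apply: cost_le_rat => //.
  by move: cost; rewrite ifN // -ltnNge.
by rewrite D_range in cost.
Qed.

Section SweepAlongPath.

Variables (P : seq pixel) (D l : nat) (q : nat -> pixel) (s0 : pixel -> nat) (c : pixel).
Hypothesis D_gt0 : 0 < D.
Hypothesis q_in_P : forall i, 1 <= i <= l -> q i \in P.
Hypothesis q_inj : forall i j, 1 <= i <= l -> 1 <= j <= l -> q i = q j -> i = j.
Hypothesis q_adj : forall i, 1 <= i < l -> adj (q i) (q i.+1).
Hypothesis adj_q1_c : adj (q 1) c.
Hypothesis c_notin_P : c \notin P.
Hypothesis capacity_s0 : capacity P D s0.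

Definition along_path u w :=
  (u \in on_path q l) && ((w \in on_path q l) || (w \notin P)).

Definition reach (st : state) (Q : state -> Prop) (n : nat) :=
  exists ms, [/\ size ms = n, valid_run P D along_path st ms
                & Q (final_state P st ms)].

Lemma reach0 st (Q : state -> Prop) : Q st -> reach st Q 0.
Proof. by exists [::]. Qed.

Lemma reach_cat st Q R n n' : reach st Q n ->
  (forall st', Q st' -> reach st' R n') -> reach st R (n + n').
Proof.
move=> [ms [<- run Qst]] /(_ _ Qst) [ms' [<- run' Rst]].
exists (ms ++ ms'); rewrite size_cat final_state_cat; split => //.
exact: valid_run_cat.
Qed.

Lemma reach_weaken st (Q R : state -> Prop) n :
  (forall st, Q st -> R st) -> reach st Q n -> reach st R n.
Proof. by move=> QR [ms [? ? /QR]]; exists ms. Qed.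

Lemma mem_on_path i : 1 <= i <= l -> q i \in on_path q l.
Proof. by move=> le_1il; apply: map_f; rewrite mem_iota; lia. Qed.

Lemma on_pathP p : p \in on_path q l -> exists2 i, 1 <= i <= l & p = q i.
Proof. by case/mapP => i; rewrite mem_iota => ? ->; exists i => //; lia. Qed.

Definition profile (g : nat -> nat) (s : pixel -> nat) :=
  (forall j, 0 < j <= l -> s (q j) = g j) /\
  (forall p, p \notin on_path q l -> s p = s0 p).

Definition at_profile i g (st : state) := st.1 = q i /\ profile g st.2.

Definition throw_target k := if k == 1 then c else q k.-1.

Definition push (g : nat -> nat) k j :=
  if j == k then 0 else if j == k.-1 then g j + g k else g j.

Lemma profile_push g s k : 1 <= k <= l -> profile g s ->
  profile (push g k) (throw_snow P s (q k) (throw_target k)).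
Proof.
move=> le_1kl [on_g off_g]; split=> [j le_0jl | p p_off].
  have qjk i : 1 <= i <= l -> (q j == q i) = (j == i).
    by move=> ?; apply/eqP/eqP => [qji|->] //; apply: q_inj qji; lia.
  rewrite /throw_snow /push /throw_target qjk //.
  case: (eqVneq j k) => // /eqP j_neq_k; case: (eqVneq k 1) => [k1|k_neq1].
    by rewrite (negbTE c_notin_P) andbF ifN ?on_g //; apply/eqP; lia.
  rewrite q_in_P ?qjk ?andbT; try lia.
  by case: eqP => _; rewrite !on_g //; lia.
have p_neq_q i : 1 <= i <= l -> (p == q i) = false.
  by move=> ?; apply/eqP => pq; move: p_off; rewrite pq mem_on_path.
rewrite /throw_snow /throw_target p_neq_q //.
case: (eqVneq k 1) => [_|k_neq1]; first by rewrite (negbTE c_notin_P) andbF off_g.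
by rewrite p_neq_q; [exact: off_g | lia].
Qed.

Lemma profile_capacity g s : profile g s ->
  (forall j, 0 < j <= l -> g j <= D) -> capacity P D s.
Proof.
move=> [on_g off_g] g_le_D p p_in_P.
case: (boolP (p \in on_path q l)) => [/on_pathP [i le_1il ->]|p_off].
  by rewrite on_g ?g_le_D.
by rewrite off_g ?capacity_s0.
Qed.

Lemma at_profile_ext i g g' st : at_profile i g st ->
  (forall j, 0 < j <= l -> g j = g' j) -> at_profile i g' st.
Proof. by move=> [pos [on_g off_g]] gg'; split=> //; split=> // j ?; rewrite on_g ?gg'. Qed.

Lemma reach_move i k g g' st : at_profile i g st -> 1 <= i <= l -> 1 <= k <= l ->
  (k == i.+1) || (i == k.+1) ->
  (forall j, 0 < j <= l -> push g k j = g' j) ->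
  (forall j, 0 < j <= l -> g' j <= D) ->
  reach st (at_profile k g') 1.
Proof.
move=> [pos prof] le_1il le_1kl ik gg' g'_le_D.
have [on_g' off_g'] := profile_push le_1kl prof.
have prof' : profile g' (throw_snow P st.2 (q k) (throw_target k)).
  by split=> // j ?; rewrite on_g' ?gg'.
exists [:: (q k, throw_target k)]; split=> //; split=> //.
- rewrite /legal_move pos q_in_P //=; apply/andP; split.
    by case/orP: ik => /eqP ki; subst; [|rewrite adjC]; apply: q_adj; lia.
  rewrite /throw_target; case: (eqVneq k 1) => [->//|k_neq1].
  have [k' kk'] : exists k', k = k'.+1 by exists k.-1; lia.
  by rewrite kk' /= adjC q_adj //; lia.
- rewrite /along_path mem_on_path //= /throw_target.
  case: (eqVneq k 1) => [_|k_neq1]; first by rewrite c_notin_P orbT.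
  by rewrite mem_on_path //; lia.
- exact: profile_capacity prof' g'_le_D.
Qed.

Definition tail a j := if a < j <= l then 1 else 0.

(* Walking out to q_i, the units of q_(a+1) .. q_i have each moved one
   pixel back; walking home at q_i, the pile on q_(i-1) holds the
   m - max(a, i-1) units collected so far. *)
Definition outward a i j :=
  if j < i then (if a <= j then 1 else 0) else if j == i then 0 else tail a j.

Definition homeward a m i j :=
  if j < i.-1 then (if a <= j then 1 else 0)
  else if j == i.-1 then m - maxn a i.-1
  else if j <= m then 0 else tail a j.

Ltac profile_arith := rewrite /push /outward /homeward /tail; repeat case: ifPn; lia.

Lemma outward_walk a m st : 1 <= a < m -> m <= l -> at_profile 1 (tail a) st ->
  forall n, n < m -> reach st (at_profile n.+1 (outward a n.+1)) n.
Proof.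
move=> le_am m_le_l start; elim=> [|n IH] n_lt_m.
  by apply/reach0/(at_profile_ext start) => j ?; profile_arith.
rewrite -[X in reach _ _ X]addn1; apply: reach_cat (IH (ltnW n_lt_m)) _ => st' st'_at.
by apply: (reach_move st'_at); try lia; move=> j ?; profile_arith.
Qed.

Lemma homeward_walk a m st : 1 <= a < m -> m <= l -> m - a <= D ->
  at_profile m (homeward a m m) st ->
  forall n, n < m -> reach st (at_profile (m - n) (homeward a m (m - n))) n.
Proof.
move=> le_am m_le_l pile_le_D tip; elim=> [|n IH] n_lt_m.
  by apply: reach0; rewrite subn0.
rewrite -[X in reach _ _ X]addn1; apply: reach_cat (IH (ltnW n_lt_m)) _ => st' st'_at.
have -> : m - n.+1 = (m - n).-1 by lia.
by apply: (reach_move st'_at); try lia; move=> j ?; profile_arith.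
Qed.

Lemma trip a m st : 1 <= a < m -> m <= l -> m - a <= D ->
  at_profile 1 (tail a) st -> reach st (at_profile 1 (tail m)) (2 * (m - 1)).
Proof.
move=> le_am m_le_l pile_le_D start.
have m1 : (m - 1).+1 = m by lia.
rewrite mul2n -addnn; apply: reach_cat (outward_walk le_am m_le_l start (n := m - 1) _) _.
  by lia.
rewrite m1 => st' out.
have tip : at_profile m (homeward a m m) st'.
  by apply: (at_profile_ext out) => j ?; profile_arith.
have home : reach st' (at_profile 1 (homeward a m 1)) (m - 1).
  have := homeward_walk le_am m_le_l pile_le_D tip (n := m - 1).
  by rewrite subKn; [apply; lia | lia].
by apply: reach_weaken home => st'' /at_profile_ext; apply=> j ?; profile_arith.
Qed.

Lemma clear_tail r : r < D -> forall k a, 1 <= a -> a + k * D + r = l ->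
  exists n, (forall st, at_profile 1 (tail a) st -> reach st (at_profile 1 (tail l)) n) /\
    D * n <= trip_rate D * tail_sum a l + D * (if 0 < r then 2 * (l - 1) else 0).
Proof.
move=> r_lt_D; elim=> [|k IH] a a_gt0 l_eq.
  case: (posnP r) => [r0|r_gt0].
    exists 0; split=> [st start|]; last lia.
    by apply/reach0/(at_profile_ext start) => j ?; rewrite /tail; have -> : a = l by lia.
  exists (2 * (l - 1)); split=> [st start|]; first by apply: trip start; lia.
  by rewrite /=; lia.
have [n [clear cost]] := IH (a + D) (ltac:(lia)) (ltac:(lia)).
exists (2 * (a + D - 1) + n); split=> [st start|].
  by apply: reach_cat (trip _ _ _ start) clear; lia.
have := batch_trip_cost D a_gt0; rewrite (@tail_sum_cat a (a + D) l); lia.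
Qed.

Lemma clear_path J : 1 <= J <= l ->
  (forall i, 1 <= i <= J -> s0 (q i) = 0) -> (forall i, J < i <= l -> s0 (q i) = 1) ->
  exists ms, [/\ valid_run P D along_path (q 1, s0) ms,
    (final_state P (q 1, s0) ms).1 = q 1,
    forall i, 1 <= i <= l -> (final_state P (q 1, s0) ms).2 (q i) = 0,
    D * size ms <= trip_rate D * tail_sum J l + D * (2 * (l - 1)) &
    (l - J) %% D = 0 -> D * size ms <= trip_rate D * tail_sum J l].
Proof.
move=> le_1Jl clear_J full_J.
have l_eq : J + (l - J) %/ D * D + (l - J) %% D = l by have := divn_eq (l - J) D; lia.
have J_gt0 : 0 < J by case/andP: le_1Jl.
have [n [sweep cost]] := clear_tail (ltn_pmod _ D_gt0) J_gt0 l_eq.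
have start : at_profile 1 (tail J) (q 1, s0).
  split=> //; split=> // j ?; rewrite /tail.
  by case: ifP => ?; [apply: full_J | apply: clear_J]; lia.
have [ms [size_ms run [end_q1 [end_on _]]]] := sweep _ start; subst n.
exists ms; split=> //.
- by move=> i ?; rewrite end_on /tail //; case: ifP; lia.
- by move: cost; case: ifP; nia.
- by move=> r0; move: cost; rewrite r0 muln0 addn0.
Qed.

End SweepAlongPath.

Theorem lemma3 (P : seq pixel) (D l J : nat) (q : nat -> pixel)
    (s0 : pixel -> nat) :
  domain P -> 2 <= D -> 1 <= l ->
  (forall i, 1 <= i <= l -> q i \in P) ->
  (forall i j, 1 <= i <= l -> 1 <= j <= l -> q i = q j -> i = j) ->
  (forall i, 1 <= i < l -> adj (q i) (q i.+1)) ->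
  straight_or_one_bend q l ->
  boundary P (q 1) ->
  (forall i, 1 <= i <= l -> vdist_is P (q i) i) ->
  1 <= J <= l ->
  (forall i, 1 <= i <= J -> s0 (q i) = 0) ->
  (forall i, J < i <= l -> s0 (q i) = 1) ->
  capacity P D s0 ->
  let Delta : rat := ((\sum_(J.+1 <= i < l.+1) i)%:R / D%:R)%R in
  exists ms : seq (pixel * pixel),
    [/\ valid_run P D
          (fun u w => (u \in on_path q l) &&
                      ((w \in on_path q l) || (w \notin P)))
          (q 1, s0) ms,
        (final_state P (q 1, s0) ms).1 = q 1,
        (forall i, 1 <= i <= l -> (final_state P (q 1, s0) ms).2 (q i) = 0),
        (4 <= D -> ((size ms)%:R <= (2 * (l - 1))%:R + 4 * Delta)%R) /\
        (D <= 3 -> ((size ms)%:R <= (2 * (l - 1))%:R + 2 * Delta)%R) &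
        ((l - J) %% D = 0 ->
          (4 <= D -> ((size ms)%:R <= 4 * Delta)%R) /\
          (D <= 3 -> ((size ms)%:R <= 2 * Delta)%R))].
Proof.
move=> _ D_ge2 _ q_in_P q_inj q_adj _ [_ [c [adj_q1_c c_notin_P]]] _.
move=> le_1Jl clear_J full_J capacity_s0 Delta.
have D_gt0 : 0 < D by lia.
have [ms [run end_q1 end_clear cost cost_exact]] :=
  clear_path D_gt0 q_in_P q_inj q_adj adj_q1_c c_notin_P capacity_s0 le_1Jl clear_J full_J.
exists ms; split=> //; first exact: trip_rate_cost_rat.
move=> /cost_exact exact_cost.
have := @trip_rate_cost_rat D (size ms) (tail_sum J l) 0 D_gt0.
by rewrite muln0 addn0 !add0r; apply.
Qed.
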